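(* Let $E$ be a finite-dimensional vector space of dimension $d\ge 2$ over a local field and let $\nu$ be a probability distribution on $\mathrm{End}(E)$. The set $\underline{\ker}(\nu)$ is a countable union of subspaces of $E$ each of dimension at most $\dim(E)-\underline{\mathrm{rank}}(\nu)$.
   Context: $\nu^{*n}$ is the law of a product of $n$ i.i.d. $\nu$-distributed endomorphisms. $\underline{\mathrm{rank}}(\nu)$ is the largest integer $r$ with $\nu^{*n}\{\gamma:\mathrm{rank}(\gamma)<r\}=0$ for all $n\ge0$. $\underline{\ker}(\nu)=\{v\in E:\exists n\ge0,\ \nu^{*n}\{h:hv=0\}>0\}$. *)

From HB Require Import structures.
From mathcomp Require Import all_boot all_order all_algebra.
From mathcomp Require Import all_classical all_reals all_analysis.

Set Implicit Arguments.
Unset Strict Implicit.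
Unset Printing Implicit Defensive.

Import Order.TTheory GRing.Theory Num.Theory.
Local Open Scope classical_set_scope.
Local Open Scope ring_scope.
HB.mixin Record Field_isLocal K of GRing.Field K & Topological K := {
  lf_add_cont : continuous (fun p : K * K => p.1 + p.2);
  lf_mul_cont : continuous (fun p : K * K => p.1 * p.2);
  lf_opp_cont : continuous (fun x : K => - x);
  lf_inv_cont : forall x : K, x != 0 -> {for x, continuous (@GRing.inv K)};
  lf_hausdorff : hausdorff_space K;
  lf_locally_compact : locally_compact [set: K];
  lf_nondiscrete : ~ open [set (0 : K)]
}.

#[short(type="localFieldType")]
HB.structure Definition LocalField :=
  {K of Field_isLocal K & GRing.Field K & Topological K}.

Local Open Scope classical_set_scope.
Local Open Scope ring_scope.

(* point the field at 0 (only needed by the library to build the Borel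
   measurable structure on matrices; the choice of point is irrelevant) *)
HB.instance Definition _ (K : localFieldType) := isPointed.Build K 0.

(* End(E), E = K^d (row vectors, endomorphisms acting on the right
   v |-> v *m h), with its Borel sigma-algebra. *)
Definition EndE (K : localFieldType) (d : nat) :=
  g_sigma_algebraType (@open 'M[K]_d).

Section Conv.
Context (K : localFieldType) (d : nat) (R : realType).
Local Open Scope ereal_scope.

Fixpoint conv_pow (nu : set (EndE K d) -> \bar R) (n : nat)
    : set (EndE K d) -> \bar R :=
  match n with
  | 0%N => fun A => \d_(1%:M : EndE K d) A
  | m.+1 => pushforward (conv_pow nu m \x nu)
              (fun p : EndE K d * EndE K d => (p.1 *m p.2 : EndE K d))
  end.

(* lower rank: the largest r with nu^{*n}{rank < r} = 0 for all n
   (such r is automatically <= d, since rank <= d always). *)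
Definition lower_rank (nu : set (EndE K d) -> \bar R) : nat :=
  \max_(r < d.+2 | `[< forall n, conv_pow nu n
                         [set g : EndE K d | (\rank g < r)%N] = 0 >]) r.

Definition lower_ker (nu : set (EndE K d) -> \bar R) : set 'rV[K]_d :=
  [set v | exists n, 0 < conv_pow nu n [set h : EndE K d | v *m h == (0 : 'rV[K]_d)%R]].

End Conv.

(** For a probability P on End(E), call a subspace S maximal when the event
    {h | S <= ker h} has positive probability while every strictly larger
    subspace is annihilated with probability 0.  For distinct maximal S and T
    the event of annihilating both is the event of annihilating S + T, which
    strictly contains S, so it is null: maximal subspaces are almost surely
    disjointly annihilated, at most k + 1 of them have probability at least
    1/(k+1), and there are countably many.  A vector v with P{h | v h = 0} > 0
    lies in a maximal subspace (take one of largest dimension containing v and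
    annihilated with positive probability), and a subspace annihilated with
    positive probability lies in the kernel of some h of rank at least
    rank(nu), so its dimension is at most d - rank(nu).  Applying this to
    every nu^{*n} gives the theorem.

    That nu^{*n} is a measure at all requires matrix multiplication to be
    measurable for the product of the Borel sigma-algebras, which holds because
    End(E) is second countable: in a local field, a topologically nilpotent
    p != 0 and a compact neighbourhood C of 0 give the countable base of
    translates x + p^n C°, x ranging over finite covers of the compacts p^-m C. *)

From HB Require Import structures.
From mathcomp Require Import all_boot all_order all_algebra.
From mathcomp Require Import all_classical all_reals all_analysis.
From mathcomp Require Import finmap ring zify.

Set Implicit Arguments.
Unset Strict Implicit.
Unset Printing Implicit Defensive.

Import Order.TTheory GRing.Theory Num.Theory.
Local Open Scope classical_set_scope.
Local Open Scope ring_scope.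

(** * Countable bases and Borel measurability *)

Definition open_base (T : topologicalType) (I : Type) (B : I -> set T) :=
  (forall i, open (B i)) /\
  forall (O : set T) x, open O -> O x -> exists i, B i x /\ B i `<=` O.

Lemma open_base_nbhs (T : topologicalType) (I : Type) (B : I -> set T) x A :
  open_base B -> nbhs x A -> exists i, B i x /\ B i `<=` A.
Proof.
move=> [_ hB]; rewrite nbhsE; move=> [U [oU Ux] UA].
by have [i [Bix BiU]] := hB U x oU Ux; exists i; split => // y /BiU /UA.
Qed.

Lemma mx_open_base (T : topologicalType) (I : Type) (B : I -> set T) m n :
  open_base B ->
  open_base (fun f : {ffun 'I_m * 'I_n -> I} =>
    [set N : 'M[T]_(m, n) | forall i j, B (f (i, j)) (N i j)]).
Proof.
move=> Bbase; split.
  move=> f; rewrite openE => N BN.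
  exists (fun i j => B (f (i, j))) => [i j|//].
  by apply: open_nbhs_nbhs; split => //; exact: Bbase.1.
move=> O N oO ON.
have [P /= nP PO] := @open_nbhs_nbhs _ N O (conj oO ON).
have /all_sig[f fP] : forall ij : 'I_m * 'I_n,
    {k | B k (N ij.1 ij.2) /\ B k `<=` P ij.1 ij.2}.
  by move=> [i j]; apply: cid; exact: open_base_nbhs.
exists [ffun ij => f ij]; split => [i j|N' BN']; first by rewrite ffunE; exact: (fP (i, j)).1.
by apply: PO => i j; apply: (fP (i, j)).2; have := BN' i j; rewrite ffunE.
Qed.

Lemma open_bigcup_base_rectangles (T1 T2 : topologicalType) (I1 I2 : Type)
    (B1 : I1 -> set T1) (B2 : I2 -> set T2) (O : set (T1 * T2)) :
  open_base B1 -> open_base B2 -> open O ->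
  O = \bigcup_(k in [set k | B1 k.1 `*` B2 k.2 `<=` O]) (B1 k.1 `*` B2 k.2).
Proof.
move=> B1base B2base oO; apply/seteqP; split => [[x y] Oxy|z [k BO Bz]]; last exact: BO.
have [[P Q] /= [nP nQ] PQ] := @open_nbhs_nbhs _ (x, y) O (conj oO Oxy).
have [i [B1x B1P]] := open_base_nbhs B1base nP.
have [j [B2y B2Q]] := open_base_nbhs B2base nQ.
exists (i, j) => //= -[x' y'] [/B1P ? /B2Q ?]; exact: PQ.
Qed.

Lemma continuous_prod_measurable_fun (T1 T2 T3 : ptopologicalType)
    (I1 I2 : countType) (B1 : I1 -> set T1) (B2 : I2 -> set T2)
    (f : T1 * T2 -> T3) :
  open_base B1 -> open_base B2 -> continuous f ->
  measurable_fun setT (f : g_sigma_algebraType (@open T1) *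
    g_sigma_algebraType (@open T2) -> g_sigma_algebraType (@open T3)).
Proof.
move=> B1base B2base cf.
apply: (measurability (@open T3 : set (set (g_sigma_algebraType _)))) => //.
move=> _ [V oV <-].
have ofV : open (f @^-1` V) by exact: (continuousP _).1 cf _ oV.
rewrite setTI (open_bigcup_base_rectangles B1base B2base ofV) bigcup_mkcond.
apply: countable_bigcupT_measurable => // k; case: ifP => _; last exact: measurable0.
by apply: measurableX; apply: sub_sigma_algebra; [exact: B1base.1|exact: B2base.1].
Qed.

Lemma cvg_mx_entrywise (T : topologicalType) U (F : set_system U) {FF : Filter F} m n
    (f : U -> 'M[T]_(m, n)) (M : 'M[T]_(m, n)) :
  (forall i j, (fun x => f x i j) @ F --> M i j) -> f @ F --> M.
Proof.
move=> fM A [P /= nP PA].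
have : \forall x \near F, forall ij : 'I_m * 'I_n, P ij.1 ij.2 (f x ij.1 ij.2).
  by apply: filter_forall => -[i j]; exact: fM.
by apply: filterS => x Px; apply: PA => i j; exact: (Px (i, j)).
Qed.

Lemma cvg_mx_entry (T : topologicalType) m n (M : 'M[T]_(m, n)) i j :
  (fun N : 'M[T]_(m, n) => N i j) @ M --> M i j.
Proof.
move=> Q nQ; exists (fun i' j' => if (i' == i) && (j' == j) then Q else setT).
  by move=> i' j'; case: ifP => [/andP[/eqP-> /eqP->] //|_]; exact: filterT.
by move=> N /(_ i j); rewrite !eqxx.
Qed.

(** * Topology of a local field *)

Section LocalField.
Variable K : localFieldType.

Lemma lf_cvgD T (F : set_system T) {FF : Filter F} (f g : T -> K) a b :
  f @ F --> a -> g @ F --> b -> (fun x => f x + g x) @ F --> a + b.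
Proof.
move=> fa gb; apply: (@continuous2_cvg _ _ _ _ F _ f g (fun x y : K => x + y)) => //.
exact: (@lf_add_cont K (a, b)).
Qed.

Lemma lf_cvgM T (F : set_system T) {FF : Filter F} (f g : T -> K) a b :
  f @ F --> a -> g @ F --> b -> (fun x => f x * g x) @ F --> a * b.
Proof.
move=> fa gb; apply: (@continuous2_cvg _ _ _ _ F _ f g (fun x y : K => x * y)) => //.
exact: (@lf_mul_cont K (a, b)).
Qed.

Lemma lf_cvg_sum T (F : set_system T) {FF : Filter F} (I : Type) (s : seq I)
    (f : I -> T -> K) (a : I -> K) :
  (forall i, f i @ F --> a i) ->
  (fun x => \sum_(i <- s) f i x) @ F --> \sum_(i <- s) a i.
Proof.
move=> fa; elim: s => [|i s IH].
  by rewrite big_nil; under eq_fun do rewrite big_nil; exact: cvg_cst.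
by rewrite big_cons; under eq_fun do rewrite big_cons; exact: lf_cvgD.
Qed.

Lemma lf_cvg_prod T (F : set_system T) {FF : Filter F} (I : Type) (s : seq I)
    (f : I -> T -> K) (a : I -> K) :
  (forall i, f i @ F --> a i) ->
  (fun x => \prod_(i <- s) f i x) @ F --> \prod_(i <- s) a i.
Proof.
move=> fa; elim: s => [|i s IH].
  by rewrite big_nil; under eq_fun do rewrite big_nil; exact: cvg_cst.
by rewrite big_cons; under eq_fun do rewrite big_cons; exact: lf_cvgM.
Qed.

Lemma lf_continuous_mull (c : K) : continuous (fun z : K => c * z).
Proof. by move=> z; apply: lf_cvgM; [exact: cvg_cst|exact: cvg_id]. Qed.

Lemma lf_continuous_affine (c x : K) : continuous (fun z : K => c * (z - x)).
Proof.
move=> z; apply: lf_cvgM; first exact: cvg_cst.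
by apply: lf_cvgD; [exact: cvg_id|exact: cvg_cst].
Qed.

Lemma lf_nbhs0_neq0 (W : set K) : nbhs 0 W -> exists2 x, W x & x != 0.
Proof.
move=> nW; apply: contrapT => noW; apply: (@lf_nondiscrete K).
rewrite openE => _ ->; apply: filterS nW => z Wz; apply: contrapT => z0.
by apply: noW; exists z => //; exact/eqP.
Qed.

Lemma lf_compact_nbhs0 : exists C : set K,
  [/\ compact C, closed C, nbhs 0 C & ~ C 1].
Proof.
have [C0 nC0 [cC0 clC0]] := @lf_locally_compact K 0 I.
have {}nC0 : nbhs (0 : K) C0.
  by move: nC0; rewrite /within /=; apply: filterS => x; apply.
have : ~ cluster (nbhs (0 : K)) 1.
  by move=> /lf_hausdorff /eqP; rewrite eq_sym oner_eq0.
move=> /existsNP [A /existsNP [B /not_implyP [nA /not_implyP [nB AB]]]].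
have clB' : closed (~` B°) by apply: open_closedC; exact: open_interior.
exists (C0 `&` ~` B°); split.
- by apply: subclosed_compact cC0 _ => //; exact: closedI.
- exact: closedI.
- apply: filterS (filterI nC0 nA) => x [C0x Ax]; split => // Bx.
  by apply: AB; exists x; split => //; exact: interior_subset.
- by move=> [_]; apply; exact: nbhs_singleton (nbhs_interior nB).
Qed.

Lemma lf_near_mul_compact (C U : set K) (a : K) : compact C ->
  (forall c, C c -> nbhs (a * c) U) ->
  \forall x \near a, forall c, C c -> U (x * c).
Proof.
move=> /compact_near_coveringP cC aCU; apply: (cC K (nbhs a) (fun x c => U (x * c))).
move=> c Cc; have [[P Q] /= [nP nQ] PQ] := @lf_mul_cont K (a, c) _ (aCU c Cc).
by exists (Q, P) => // -[c' x] /= [Qc' Px]; exact: (PQ (x, c')).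
Qed.

Lemma lf_nbhs_divr (y : K) (B : set K) : y != 0 -> nbhs 1 B ->
  exists2 Y, nbhs y Y & forall a b, Y a -> Y b -> B (a / b).
Proof.
move=> y0 nB; have := @lf_mul_cont K (y, y^-1) B; rewrite mulfV // => /(_ nB).
case=> [[P Q] /= [nP nQ] PQ].
have nQV : nbhs y [set b | Q b^-1] := @lf_inv_cont K y y0 _ nQ.
exists (P `&` [set b | Q b^-1]); first exact: filterI.
by move=> a b [Pa _] [_ Qb]; exact: (PQ (a, b^-1)).
Qed.

Lemma lf_nbhs_translate (O : set K) (y : K) : nbhs y O ->
  exists2 N, nbhs 0 N & forall a b, N a -> N b -> O (y + a - b).
Proof.
move=> nO; have := @lf_add_cont K (y, 0) O; rewrite addr0 => /(_ nO).
case=> [[P Q] /= [nP nQ] PQ].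
have := @lf_add_cont K (y, 0) P; rewrite addr0 => /(_ nP).
case=> [[P' Q'] /= [nP' nQ'] PQ'].
have nQN : nbhs (0 : K) [set b | Q (- b)].
  by have := @lf_opp_cont K 0 Q; rewrite oppr0; apply.
exists (Q' `&` [set b | Q (- b)]); first exact: filterI.
move=> a b [Q'a _] [_ Qb]; apply: (PQ (y + a, - b)); split => //=.
by apply: (PQ' (y, a)); split => //=; exact: nbhs_singleton.
Qed.

Lemma lf_topologically_nilpotent :
  exists2 p : K, p != 0 & (fun n => p ^+ n) @ \oo --> 0.
Proof.
have [C [cC clC nC C1]] := lf_compact_nbhs0.
have nW : \forall x \near (0 : K), C x /\ forall c, C c -> C (x * c).
  near=> x; split; first by near: x.
  by near: x; apply: lf_near_mul_compact => // c _; rewrite mul0r.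
have [x [Cx xC] x0] := lf_nbhs0_neq0 nW.
have Cx_pow n : C (x ^+ n.+1).
  by elim: n => [|n IH]; rewrite ?expr1 // exprS; exact: xC.
pose G := (fun n => x ^+ n) @ \oo.
have GC : G C by exists 1%N => // n /= n1; rewrite -(prednK n1); exact: Cx_pow.
(* A nonzero cluster point of the powers puts x ^+ n2 / x ^+ n1 near 1, hence 1 in C. *)
have cluster0 y : cluster G y -> y = 0.
  move=> cGy; apply: contrapT => /eqP y0; apply: C1; apply: clC => B nB.
  have [Y nY YB] := lf_nbhs_divr y0 nB.
  have ex N : exists2 n, (N <= n)%N & Y (x ^+ n).
    have GN : G [set z | exists2 n, (N <= n)%N & z = x ^+ n].
      by exists N => // n /= Nn; exists n.
    by have [_ [[n Nn ->] Yz]] := cGy _ _ GN nY; exists n.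
  have [n1 n1_gt0 Y1] := ex 1%N; have [n2 n12 Y2] := ex n1.+1.
  exists (x ^+ n2 / x ^+ n1); split; last exact: YB.
  by rewrite -expfB // -(subnSK n12); exact: Cx_pow.
exists x => //; have PG : ProperFilter G by exact: fmap_proper_filter.
have [y [_ cGy]] := cC G PG GC.
apply: (compact_cluster_set1 (@lf_hausdorff K) cC nC PG GC).
by apply/seteqP; split => [z|z ->]; [exact: cluster0|rewrite -(cluster0 _ cGy)].
Unshelve. all: by end_near. Qed.

Lemma lf_open_base :
  exists B : nat * nat * nat -> set K, open_base B.
Proof.
have [p p0 p_cvg] := lf_topologically_nilpotent.
have [C [cC clC nC _]] := lf_compact_nbhs0.
have pn0 n : p ^+ n != 0 by rewrite expf_neq0.
pose ball (x : K) n := [set z | C° ((p ^+ n)^-1 * (z - x))].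
have oball x n : open (ball x n).
  exact: (continuousP _).1 (@lf_continuous_affine (p ^+ n)^-1 x) _ (@open_interior _ C).
pose D m := [set y : K | C (p ^+ m * y)].
have cD m : compact (D m).
  have -> : D m = [set (p ^+ m)^-1 * c | c in C].
    apply/seteqP; split => y /=; last by move=> [c Cc <-]; rewrite /D /= mulVKf.
    by move=> Cy; exists (p ^+ m * y) => //; rewrite mulKf.
  by apply: continuous_compact => //; apply: continuous_subspaceT; exact: lf_continuous_mull.
have /all_sig[X DX] (mn : nat * nat) :
    {X : {fset K} | D mn.1 `<=` cover [set` X] (fun x => ball x mn.2)}.
  case: mn => m n /=; apply: cid.
  have Dcover : D m `<=` cover (D m) (fun x => ball x n).
    by move=> y Dy; exists y => //; rewrite /ball /= subrr mulr0.
  have := cD m; rewrite compact_cover => /(_ K (D m) (fun x => ball x n)).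
  case=> [x _|//|X _ cov]; first exact: oball.
  by exists X.
exists (fun k => ball (nth 0 (X k.1) k.2) k.1.2); split => [k|O y oO Oy].
  exact: oball.
have [N nN NO] := lf_nbhs_translate (open_nbhs_nbhs (conj oO Oy)).
have near0 : \forall a \near 0, forall c, C c -> N (a * c).
  by apply: lf_near_mul_compact => // c _; rewrite mul0r.
have near_oo : \forall n \near \oo, forall c, C c -> N (p ^+ n * c).
  exact: p_cvg near0.
have [n /= Cn] := filter_ex near_oo.
have py_cvg : (fun m => p ^+ m * y) @ \oo --> 0.
  by rewrite -(mul0r y); apply: lf_cvgM => //; exact: cvg_cst.
have [m /= Dm] := filter_ex (py_cvg _ nC : \forall m \near \oo, C (p ^+ m * y)).
have [x Xx yx] := DX (m, n) y Dm.
exists (m, n, index x (X (m, n))); rewrite /= nth_index //; split => // z zx.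
have -> : z = y + p ^+ n * ((p ^+ n)^-1 * (z - x))
            - p ^+ n * ((p ^+ n)^-1 * (y - x)) by rewrite !mulVKf //; ring.
by apply: NO; apply: Cn; exact: interior_subset.
Qed.

End LocalField.

(** * Matrices over a local field *)

Lemma rank_lt_detP (F : fieldType) m n r (h : 'M[F]_(m, n)) :
  (\rank h < r)%N <->
  forall (A : 'M[F]_(r, m)) (B : 'M[F]_(n, r)), \det (A *m h *m B) = 0.
Proof.
split=> [hr A B|h_det].
  apply/eqP; apply: contraLR hr; rewrite -unitfE -unitmxE -leqNgt => /mxrank_unit <-.
  exact: leq_trans (mxrankM_maxl _ _) (mxrankM_maxr _ _).
rewrite ltnNge; apply/negP => rh.
have := h_det (pid_mx r *m invmx (col_ebase h)) (invmx (row_ebase h) *m pid_mx r).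
rewrite -{2}(mulmx_ebase h) !mulmxA mulmxKV ?col_ebase_unit //.
rewrite mulmxK ?row_ebase_unit // !mul_pid_mx.
have [hm hn] := (rank_leq_row h, rank_leq_col h).
have -> : minn n (minn (minn m (minn r (\rank h))) r) = r by lia.
by rewrite pid_mx_1 det1 => /eqP; rewrite oner_eq0.
Qed.

Section MatrixTopology.
Variable K : localFieldType.

Lemma mulmx_continuous m n p :
  continuous (fun q : 'M[K]_(m, n) * 'M[K]_(n, p) => q.1 *m q.2).
Proof.
move=> q; apply: cvg_mx_entrywise => i j; under eq_fun do rewrite mxE; rewrite mxE.
apply: lf_cvg_sum => k; apply: lf_cvgM.
- have q1 : fst @ q --> q.1 := cvg_fst (FG := nbhs_filter q.2).
  apply: (cvg_comp _ (fun N : 'M[K]_(m, n) => N i k) q1); exact: cvg_mx_entry.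
- have q2 : snd @ q --> q.2 := cvg_snd (FF := nbhs_filter q.1).
  apply: (cvg_comp _ (fun N : 'M[K]_(n, p) => N k j) q2); exact: cvg_mx_entry.
Qed.

Lemma mulmxl_continuous m n p (A : 'M[K]_(m, n)) :
  continuous (fun h : 'M[K]_(n, p) => A *m h).
Proof.
move=> h; apply: (@continuous2_cvg _ _ _ _ (nbhs h) _ (fun=> A) id mulmx A h).
- exact: (@mulmx_continuous m n p (A, h)).
- exact: cvg_cst.
- exact: cvg_id.
Qed.

Lemma mulmxr_continuous m n p (B : 'M[K]_(n, p)) :
  continuous (fun h : 'M[K]_(m, n) => h *m B).
Proof.
move=> h; apply: (@continuous2_cvg _ _ _ _ (nbhs h) _ id (fun=> B) mulmx h B).
- exact: (@mulmx_continuous m n p (h, B)).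
- exact: cvg_id.
- exact: cvg_cst.
Qed.

Lemma det_continuous n : continuous (fun M : 'M[K]_n => \det M).
Proof.
move=> M; apply: (@lf_cvg_sum _ _ (nbhs M)) => s.
apply: (@lf_cvgM _ _ (nbhs M)); first exact: cvg_cst.
by apply: (@lf_cvg_prod _ _ (nbhs M)) => i; exact: cvg_mx_entry.
Qed.

Lemma closed_zero_locus (T : topologicalType) (I : Type) (f : I -> T -> K) :
  (forall i, continuous (f i)) -> closed [set x | forall i, f i x = 0].
Proof.
move=> cf; have -> : [set x | forall i, f i x = 0] = \bigcap_i (f i @^-1` [set 0]).
  by apply/seteqP; split => x /= fx i; [move=> _|]; exact: fx.
apply: closed_bigI => i _; apply: preimage_closed => [x _|]; first exact: cf.
exact: (accessible_closed_set1 (hausdorff_accessible (@lf_hausdorff K))).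
Qed.

Lemma closed_rank_lt m n r : closed [set h : 'M[K]_(m, n) | (\rank h < r)%N].
Proof.
have -> : [set h : 'M[K]_(m, n) | (\rank h < r)%N] =
    [set h | forall AB : 'M[K]_(r, m) * 'M[K]_(n, r), \det (AB.1 *m h *m AB.2) = 0].
  apply/seteqP; split => h /= hr; first by move=> [A B]; exact: (rank_lt_detP r h).1.
  by apply/(rank_lt_detP r h) => A B; exact: (hr (A, B)).
apply: closed_zero_locus => -[A B] h /=.
apply: (@continuous_comp _ _ _ (fun h => A *m h *m B) (fun M => \det M) h).
  apply: (@continuous_comp _ _ _ (fun h => A *m h) (fun M => M *m B) h).
    exact: mulmxl_continuous.
  exact: mulmxr_continuous.
exact: det_continuous.
Qed.

Lemma closed_mulmx_eq0 p m n (S : 'M[K]_(p, m)) :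
  closed [set h : 'M[K]_(m, n) | S *m h == 0].
Proof.
have -> : [set h : 'M[K]_(m, n) | S *m h == 0] =
    [set h | forall ij : 'I_p * 'I_n, (S *m h) ij.1 ij.2 = 0].
  apply/seteqP; split => h /=; first by move=> /eqP -> [i j]; rewrite mxE.
  by move=> h0; apply/eqP/matrixP => i j; rewrite [RHS]mxE; exact: (h0 (i, j)).
apply: closed_zero_locus => -[i j] h.
apply: (@continuous_comp _ _ _ (fun h => S *m h) (fun M => M i j) h).
  exact: mulmxl_continuous.
exact: cvg_mx_entry.
Qed.

End MatrixTopology.

(** * Convolution powers and maximal annihilated subspaces *)

Lemma measure_bigsetU_nullI d (T : measurableType d) (R : realFieldType)
    (mu : {measure set T -> \bar R}) (I : eqType) (s : seq I) (F : I -> set T) :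
  uniq s -> (forall i, measurable (F i)) ->
  (forall i j, i \in s -> j \in s -> i != j -> mu (F i `&` F j) = 0%E) ->
  mu (\big[setU/set0]_(i <- s) F i) = (\sum_(i <- s) mu (F i))%E.
Proof.
elim: s => [|i s IH] /=; first by rewrite !big_nil measure0.
move=> /andP[i_notin_s s_uniq] mF null_meet.
rewrite !big_cons -IH // => [|j k js ks]; last by apply: null_meet; rewrite inE ?js ?ks orbT.
set U := \big[setU/set0]_(j <- s) F j.
have mU : measurable U by exact: bigsetU_measurable.
have UFi : mu (U `&` F i) = 0%E.
  rewrite /U big_distrl big_seq /=.
  suff [] : measurable (\big[setU/set0]_(j <- s | j \in s) (F j `&` F i)) /\
         mu (\big[setU/set0]_(j <- s | j \in s) (F j `&` F i)) = 0%E by [].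
  elim/big_rec: _ => [|j A js [mA A0]]; first by rewrite measure0.
  have mFji : measurable (F j `&` F i) by exact: measurableI.
  split; first exact: measurableU.
  apply: null_set_setU => //; apply: null_meet; rewrite ?inE ?js ?eqxx ?orbT //.
  by apply: contraNneq i_notin_s => <-.
have -> : F i `|` U = F i `|` (U `\` F i) by rewrite setUDr setDv setD0.
rewrite measureU //; last 2 first.
- exact: measurableD.
- by rewrite setDE setICA setICr setI0.
congr (_ + _)%E; rewrite -[in RHS](setUIDK U (F i)) setUC measureU0 //.
- exact: measurableD.
- exact: measurableI.
Qed.

Section ConvolutionPowers.
Context (K : localFieldType) (d : nat) (R : realType).

Lemma measurable_EndE_closed (C : set 'M[K]_d) :
  closed C -> measurable (C : set (EndE K d)).
Proof.
move=> cC; rewrite -(setCK C); apply: measurableC; apply: sub_sigma_algebra.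
exact: closed_openC.
Qed.

Definition end_mul (gh : EndE K d * EndE K d) : EndE K d := gh.1 *m gh.2.

Lemma measurable_end_mul : measurable_fun setT end_mul.
Proof.
have [B Bbase] := lf_open_base K.
exact: continuous_prod_measurable_fun (mx_open_base d d Bbase)
  (mx_open_base d d Bbase) (@mulmx_continuous K d d d).
Qed.

HB.instance Definition _ :=
  isMeasurableFun.Build _ _ _ _ end_mul measurable_end_mul.

Fixpoint conv_prob (nu : probability (EndE K d) R) (n : nat) :
    probability (EndE K d) R :=
  if n is m.+1 then distribution (conv_prob nu m \x nu)%E end_mul
  else \d_(1%:M : EndE K d).

Lemma conv_powE (nu : probability (EndE K d) R) n :
  conv_pow nu n = conv_prob nu n.
Proof. by elim: n => //= n ->. Qed.

End ConvolutionPowers.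

Lemma finite_set_bounded_uniq (T : eqType) (A : set T) (N : nat) :
  (forall s : seq T, uniq s -> (forall x, x \in s -> A x) -> (size s <= N)%N) ->
  finite_set A.
Proof.
move=> bound; pose big n := exists s, [/\ uniq s, forall x, x \in s -> A x & size s = n].
have big0 : exists n, `[< big n >] by exists 0%N; apply/asboolP; exists [::].
have big_le n : `[< big n >] -> (n <= N)%N.
  by move=> /asboolP[s [us sA <-]]; exact: bound.
have [_ /asboolP[s [us sA <-]] smax] := ex_maxnP big0 big_le.
apply/finite_seqP; exists s; apply/seteqP; split => [x Ax|x /sA //].
apply: contrapT => /negP xs; suff /smax : `[< big (size s).+1 >] by rewrite ltnn.
apply/asboolP; exists (x :: s); split => //=; first by rewrite xs.
by move=> y; rewrite inE => /predU1P[->|/sA].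
Qed.

Lemma countable_range (T : pointedType) (A : set T) :
  countable A -> A !=set0 -> exists f : nat -> T, range f = A.
Proof.
move=> /pcard_surjP[g Ag] [a Aa].
exists (fun n => if pselect (A (g n)) is left _ then g n else a).
apply/seteqP; split => [_ [n _ <-]|x Ax]; first by case: pselect.
by have [n _ gn] := Ag x Ax; exists n => //; case: pselect => //; rewrite gn.
Qed.

Section Annihilators.
Context (K : localFieldType) (d : nat).

Definition annihilator p (S : 'M[K]_(p, d)) : set (EndE K d) :=
  [set h | S *m h == 0].

Lemma measurable_annihilator p (S : 'M[K]_(p, d)) : measurable (annihilator S).
Proof. by apply: measurable_EndE_closed; exact: closed_mulmx_eq0. Qed.

Lemma annihilatorS p q (S : 'M[K]_(p, d)) (T : 'M[K]_(q, d)) :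
  (S <= T)%MS -> annihilator T `<=` annihilator S.
Proof. by move=> ST h /eqP/sub_kermxP Th; apply/eqP/sub_kermxP; exact: submx_trans Th. Qed.

Lemma annihilator_eqmx p q (S : 'M[K]_(p, d)) (T : 'M[K]_(q, d)) :
  (S == T)%MS -> annihilator S = annihilator T.
Proof. by move=> /andP[ST TS]; apply/seteqP; split; exact: annihilatorS. Qed.

Lemma annihilatorI (S T : 'M[K]_d) :
  annihilator S `&` annihilator T = annihilator (S + T)%MS.
Proof.
apply/seteqP; split => h; rewrite /annihilator /= -!(sameP sub_kermxP eqP).
  by move=> [ShK ThK]; rewrite addsmx_sub ShK ThK.
by rewrite addsmx_sub => /andP[].
Qed.

End Annihilators.

Section MaximalAnnihilated.
Context (K : localFieldType) (d : nat) (R : realType).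
Variable P : probability (EndE K d) R.
Local Open Scope ereal_scope.

(* [<<S>> = S] keeps one matrix per subspace, so distinct maximal subspaces
   are distinct matrices. *)
Definition max_annihilated (S : 'M[K]_d) :=
  [/\ <<S>>%MS = S, 0 < P (annihilator S) &
      forall S' : 'M[K]_d, (S < S')%MS -> P (annihilator S') = 0].

Lemma max_annihilated_meet_null (S T : 'M[K]_d) :
  max_annihilated S -> max_annihilated T -> S != T ->
  P (annihilator S `&` annihilator T) = 0.
Proof.
move=> [genS PS Smax] [genT _ Tmax] neST; rewrite annihilatorI; apply: Smax.
rewrite ltmxE addsmxSl /= addsmx_sub submx_refl /=; apply/negP => TS.
have [ST|nST] := boolP (S <= T)%MS.
  have /eqmxP/eq_genmx : (S == T)%MS by rewrite ST TS.
  by rewrite genS genT => eqST; rewrite eqST eqxx in neST.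
have /Tmax PT0 : (T < S)%MS by rewrite ltmxE TS nST.
by rewrite PT0 ltxx in PS.
Qed.

Lemma max_annihilated_size (k : nat) (s : seq 'M[K]_d) : uniq s ->
    (forall S, S \in s -> max_annihilated S /\ (k.+1%:R^-1)%:E <= P (annihilator S)) ->
  (size s <= k.+1)%N.
Proof.
move=> us sH.
have sum_ge : ((size s)%:R * k.+1%:R^-1)%:E <= \sum_(S <- s) P (annihilator S).
  elim: s us sH => [|S s IH] /=; first by rewrite big_nil mul0r.
  move=> /andP[_ us] sH; rewrite big_cons -addn1 natrD mulrDl mul1r EFinD addeC.
  apply: leeD; first exact: (sH S (mem_head _ _)).2.
  by apply: IH => // T Ts; apply: sH; rewrite inE Ts orbT.
have sum_le1 : \sum_(S <- s) P (annihilator S) <= 1.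
  rewrite -(measure_bigsetU_nullI (F := fun S => annihilator S) us).
  - rewrite -(probability_setT P); apply: le_measure => //; apply/mem_set => //.
    by apply: bigsetU_measurable => S _; exact: measurable_annihilator.
  - by move=> S; exact: measurable_annihilator.
  by move=> S T Ss Ts; apply: max_annihilated_meet_null; [exact: (sH S Ss).1|exact: (sH T Ts).1].
have := le_trans sum_ge sum_le1.
by rewrite lee_fin ler_pdivrMr ?ltr0Sn // mul1r ler_nat.
Qed.

Lemma countable_max_annihilated : countable [set S | max_annihilated S].
Proof.
have -> : [set S | max_annihilated S] = \bigcup_k
    [set S | max_annihilated S /\ (k.+1%:R^-1)%:E <= P (annihilator S)].
  apply/seteqP; split => [S maxS|S [k _ []] //].
  have [_ PS_gt0 _] := maxS.
  case PS: (P (annihilator S)) PS_gt0 => [x||//]; last first.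
    by exists 0%N => //; split; rewrite // PS leey.
  rewrite lte_fin => x_gt0.
  have [k /ltW k_le] := filter_ex (near_infty_natSinv_lt (PosNum x_gt0)).
  by exists k => //; split; rewrite // PS lee_fin.
apply: bigcup_countable => // k _; apply: finite_set_countable.
by apply: (@finite_set_bounded_uniq _ _ k.+1) => s us sH; exact: max_annihilated_size.
Qed.

Lemma annihilatedS p q (S : 'M[K]_(p, d)) (T : 'M[K]_(q, d)) :
  (S <= T)%MS -> 0 < P (annihilator T) -> 0 < P (annihilator S).
Proof.
move=> ST /lt_le_trans; apply; apply: le_measure; rewrite ?inE.
- by apply/mem_set; exact: measurable_annihilator.
- by apply/mem_set; exact: measurable_annihilator.
exact: annihilatorS.
Qed.

Lemma annihilated_rank_le r (S : 'M[K]_d) :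
  P [set g : EndE K d | (\rank g < r)%N] = 0 -> 0 < P (annihilator S) ->
  (\rank S <= d - r)%N.
Proof.
move=> P_rank_lt PS.
have [h Sh rh] : exists2 h : EndE K d, S *m h == 0%R & ~ (\rank h < r)%N.
  apply: contrapT => noh; suff : P (annihilator S) <= 0 by rewrite leNgt PS.
  rewrite -P_rank_lt; apply: le_measure; rewrite ?inE.
  - by apply/mem_set; exact: measurable_annihilator.
  - by apply/mem_set; apply: measurable_EndE_closed; exact: closed_rank_lt.
  by move=> g Sg; apply: contrapT => rg; apply: noh; exists g.
move/negP: rh; rewrite -leqNgt => rh.
have /mxrankS : (S <= kermx h)%MS by apply/sub_kermxP/eqP.
rewrite mxrank_ker; lia.
Qed.

Lemma annihilated_sub_max p (v : 'M[K]_(p, d)) :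
  0 < P (annihilator v) -> exists2 S, max_annihilated S & (v <= S)%MS.
Proof.
move=> Pv; pose big k := exists S : 'M[K]_d,
  [/\ (v <= S)%MS, 0 < P (annihilator S) & \rank S = k].
have big0 : exists k, `[< big k >].
  exists (\rank <<v>>)%MS; apply/asboolP; exists <<v>>%MS.
  by rewrite genmxE (annihilator_eqmx (introT eqmxP (genmxE v))).
have big_le k : `[< big k >] -> (k <= d)%N.
  by move=> /asboolP[S [_ _ <-]]; exact: rank_leq_row.
have [_ /asboolP[S [vS PS <-]] Smax] := ex_maxnP big0 big_le.
exists <<S>>%MS; last by rewrite genmxE.
split; first exact: genmx_id.
  by rewrite (annihilator_eqmx (introT eqmxP (genmxE S))).
move=> S' ltSS'; apply/eqP; rewrite eq_le measure_ge0 andbT leNgt; apply/negP => PS'.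
have /Smax : `[< big (\rank S') >].
  apply/asboolP; exists S'; split => //.
  by apply: submx_trans (ltmxW ltSS'); rewrite genmxE.
by move: ltSS'; rewrite ltmxErank mxrank_gen ltnNge => /andP[_ /negP].
Qed.

End MaximalAnnihilated.

Lemma conv_pow_rank_lt_lower_rank (K : localFieldType) (d : nat) (R : realType)
    (nu : probability (EndE K d) R) n :
  conv_pow nu n [set g : EndE K d | (\rank g < lower_rank nu)%N] = 0%E.
Proof.
pose A := [pred r : 'I_d.+2 | `[< forall n,
  conv_pow nu n [set g : EndE K d | (\rank g < r)%N] = 0%E >]].
have A0 : (0 < #|A|)%N.
  apply/card_gt0P; exists ord0; rewrite inE; apply/asboolP => m.
  rewrite [X in conv_pow _ _ X](_ : _ = set0); last by apply/seteqP; split.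
  by rewrite conv_powE measure0.
have [r Ar max_r] := eq_bigmax_cond (fun r : 'I_d.+2 => nat_of_ord r) A0.
suff -> : lower_rank nu = r by move: Ar; rewrite inE => /asboolP.
exact: max_r.
Qed.

Lemma lower_ker0 (K : localFieldType) (d : nat) (R : realType)
    (nu : probability (EndE K d) R) :
  lower_ker nu (0 : 'rV[K]_d).
Proof. by exists 0%N; rewrite /= diracE mem_set //= mul0mx. Qed.

Theorem proposition3p5 (K : localFieldType) (R : realType) (d : nat)
    (hd : (2 <= d)%N) (nu : probability (EndE K d) R) :
  exists S : nat -> 'M[K]_d,
    (forall i, (\rank (S i) <= d - lower_rank nu)%N) /\
    lower_ker nu = \bigcup_i [set v : 'rV[K]_d | (v <= S i)%MS].
Proof.
pose W := \bigcup_n [set S | max_annihilated (conv_prob nu n) S].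
have lower_ker_sub_W v : lower_ker nu v -> exists2 S, W S & (v <= S)%MS.
  move=> [n]; rewrite conv_powE => /annihilated_sub_max[S maxS vS].
  by exists S => //; exists n.
have [S SW] : exists S : nat -> 'M[K]_d, range S = W.
  apply: countable_range.
    by apply: bigcup_countable => // n _; exact: countable_max_annihilated.
  by have [S WS _] := lower_ker_sub_W _ (lower_ker0 nu); exists S.
have WS i : W (S i) by rewrite -SW; exists i.
exists S; split => [i|].
  have [n _ [_ PS _]] := WS i; apply: annihilated_rank_le PS.
  by rewrite -conv_powE; exact: conv_pow_rank_lt_lower_rank.
apply/seteqP; split => [v /lower_ker_sub_W[T]|v [i _ vS]].
  by rewrite -SW => -[i _ <-] vS; exists i.
have [n _ [_ PS _]] := WS i; exists n; rewrite conv_powE.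
exact: annihilatedS vS PS.
Qed.
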